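(* Let $k\ge 2$, $p\in(0,1)$, $q=1-p$. Then $M^{(k)}_1(p)=k-1$, and for all $n\ge 2$, $$M^{(k)}_n(p)=\frac1q\sum_{0<i<n} s^{(k)}_i\,(p^{k-1}q)^i\,M^{(k)}_{n-i}(p)\;+\;L^{(k)}_n(p),$$ where $$L^{(k)}_n(p)=(p^{k-1}q)^n\,\frac1q\sum_{j=k}^{(k-1)n} j\,d^{(k)}_{n,j}\,(1/p)^j,$$ and for $k\le j\le (k-1)n$, $$d^{(k)}_{n,j}=\binom{kn-2-j}{n-2}-\sum_{\ell=1}^{\,n-\lceil j/(k-1)\rceil} s^{(k)}_\ell\binom{k(n-\ell)-1-j}{n-\ell-1},$$ with $d^{(k)}_{n,j}=0$ for other $j$.
   Context: Matchbox process: fix integers $k\ge 2$, $n\ge 1$ and $p\in(0,1)$, $q=1-p$. Initially $k$ boxes each contain $n$ matches. At each time step, independently of the past, with probability $p$ a match is removed from a box currently containing the largest number of matches (''big-chooser''), and with probability $q$ a match is removed from a box currently containing the smallest number of matches (''little-chooser''); ties are broken arbitrarily (this does not affect the quantities below). The process is run until the first time some box is empty. The residue $X^{(k)}_n(p)$ is the total number of matches in the other $k-1$ boxes at that time, and $M^{(k)}_n(p)=\mathbb{E}[X^{(k)}_n(p)]$ is the expected residue. For $i\ge1$, $s^{(k)}_i=\frac{k-1}{ki-1}\binom{ki-1}{i-1}$. *)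

From mathcomp Require Import all_boot all_order all_algebra.
Set Implicit Arguments. Unset Strict Implicit. Unset Printing Implicit Defensive.
Import Order.TTheory GRing.Theory Num.Theory.
Local Open Scope ring_scope.

(* A state is the sequence of box contents (size k). *)
Definition bigcount (s : seq nat) : nat := \max_(x <- s) x.
Definition littlecount (s : seq nat) : nat := foldl minn (head 0%N s) s.

Definition remove_at (s : seq nat) (i : nat) : seq nat :=
  set_nth 0%N s i (nth 0%N s i).-1.

(* One step: b = true is the "big-chooser" move (remove from a largest box),
   b = false the "little-chooser" move (remove from a smallest box).
   Ties are broken by choosing the first such box. *)
Definition mb_step (b : bool) (s : seq nat) : seq nat :=
  if b then remove_at s (index (bigcount s) s)
  else remove_at s (index (littlecount s) s).

(* Run the process driven by the choice sequence cs until some box is empty;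
   then return the residue: total number of matches in the other boxes
   (the empty box contributes 0, so this is the total count). *)
Fixpoint mb_run (s : seq nat) (cs : seq bool) : nat :=
  if 0%N \in s then sumn s
  else match cs with
       | [::] => sumn s
       | b :: cs' => mb_run (mb_step b s) cs'
       end.

Definition choice_weight {R : ringType} (p : R) (cs : seq bool) : R :=
  \prod_(b <- cs) (if b then p else 1 - p).

(* Expected residue M^(k)_n(p).  k*n steps always suffice for some box to become
   empty (each step removes a match), so summing over all choice sequences of
   length k*n with the product probability is the exact expectation. *)
Definition M {R : ringType} (k n : nat) (p : R) : R :=
  \sum_(t : (k * n).-tuple bool)
     choice_weight p t * (mb_run (nseq k n) t)%:R.

Definition sk {R : fieldType} (k i : nat) : R :=
  (k.-1)%:R / ((k * i).-1)%:R * ('C((k * i).-1, i.-1))%:R.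

Definition ceil_div (j d : nat) : nat := (j + d.-1) %/ d.

Definition dk {R : fieldType} (k n j : nat) : R :=
  if (k <= j)%N && (j <= k.-1 * n)%N then
    ('C(k * n - 2 - j, n - 2))%:R
    - \sum_(1 <= l < (n - ceil_div j k.-1).+1)
         sk k l * ('C(k * (n - l) - 1 - j, n - l - 1))%:R
  else 0.

Definition Lk {R : fieldType} (k n : nat) (p : R) : R :=
  (p ^+ k.-1 * (1 - p)) ^+ n * (1 - p)^-1 *
  \sum_(k <= j < (k.-1 * n).+1) j%:R * dk k n j * (p^-1) ^+ j.

(* Write k = c + 1.  Up to order, a state is described by the size m of a smallest box and
   the excess D of the other boxes over it: a little move sends (m, D) to (m - 1, D + c), a big
   move sends (m, D + 1) to (m, D) and (m, 0) to (m - 1, c), and the residue at m = 0 is D.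
   So the expected residue F(m, D) solves a linear recursion, and M_n = F(n, 0) = F(n - 1, c).
   The function phi obtained by ignoring the boundary D = 0 solves the same recursion off the
   boundary, hence F - phi is the combination of its boundary values F(m', 0) - phi(m', 0)
   weighted by the probability of first reaching D = 0 at level m'.  By the cycle lemma these
   weights are ballot numbers, and from D = c they are s_i (p^(k-1) q)^i / q: the boundary
   values of F give the convolution term, and phi minus its weighted boundary values is L. *)

From mathcomp Require Import all_boot all_order all_algebra zify ring.
Set Implicit Arguments. Unset Strict Implicit. Unset Printing Implicit Defensive.
Import Order.TTheory GRing.Theory Num.Theory.

Lemma perm_remove_at_index (s : seq nat) v : v \in s ->
  perm_eq (remove_at s (index v s)) (v.-1 :: rem v s).
Proof.
rewrite /remove_at; elim: s => [|x s IHs] //= v_in.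
case: eqP => [->|/eqP neq_xv] //=.
have v_s : v \in s by move: v_in; rewrite in_cons eq_sym (negbTE neq_xv).
apply: perm_trans (_ : perm_eq _ (x :: v.-1 :: rem v s)) _.
  by rewrite perm_cons IHs.
by rewrite -(cat1s x) -(cat1s v.-1) perm_catCA.
Qed.

Lemma perm_rem_cons (s t : seq nat) v :
  v \in s -> perm_eq s (v :: t) -> perm_eq (rem v s) t.
Proof.
move=> v_s s_vt; rewrite -(perm_cons v); apply: perm_trans _ s_vt.
by rewrite perm_sym perm_to_rem.
Qed.

Lemma foldl_minn_spec y (t : seq nat) :
  [/\ foldl minn y t \in y :: t, foldl minn y t <= y
    & forall x, x \in t -> foldl minn y t <= x].
Proof.
elim: t y => [|x t IHt] y /=; first by rewrite mem_seq1 eqxx.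
have [min_in min_le min_lb] := IHt (minn y x).
split=> [|| z].
- move: min_in; rewrite !in_cons => /orP[/eqP->|->]; last by rewrite !orbT.
  by rewrite /minn; case: ltnP; rewrite eqxx ?orbT.
- exact: leq_trans min_le (geq_minl _ _).
- rewrite in_cons => /orP[/eqP->|/min_lb //].
  exact: leq_trans min_le (geq_minr _ _).
Qed.

Lemma littlecount_spec (s : seq nat) : s != [::] ->
  littlecount s \in s /\ forall x, x \in s -> littlecount s <= x.
Proof.
case: s => [|y t] // _; rewrite /littlecount /= minnn.
have [min_in min_le min_lb] := foldl_minn_spec y t.
by split=> // x; rewrite in_cons => /orP[/eqP->|/min_lb].
Qed.

Lemma bigcount_spec (s : seq nat) : s != [::] ->
  bigcount s \in s /\ forall x, x \in s -> x <= bigcount s.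
Proof.
rewrite /bigcount; elim: s => [|y [|z t] IHt] // _; rewrite big_cons.
  by rewrite big_nil maxn0 mem_seq1; split=> // x; rewrite mem_seq1 => /eqP->.
have [max_in max_ub] := IHt isT.
split=> [|x]; first by rewrite /maxn; case: ltnP; rewrite in_cons ?max_in ?eqxx ?orbT.
rewrite in_cons => /orP[/eqP->|/max_ub x_le]; first exact: leq_maxl.
exact: leq_trans x_le (leq_maxr _ _).
Qed.

Lemma perm_mb_step_big (s t : seq nat) v :
  perm_eq s (v :: t) -> {in t, forall x, x <= v} ->
  perm_eq (mb_step true s) (v.-1 :: t).
Proof.
rewrite /mb_step => s_vt t_le; have v_s : v \in s by rewrite (perm_mem s_vt) mem_head.
have s_ne0 : s != [::] by case: (s) v_s.
have [max_in max_ub] := bigcount_spec (s := s) s_ne0.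
have -> : bigcount s = v.
  apply/eqP; rewrite eqn_leq max_ub // andbT.
  by move: max_in; rewrite (perm_mem s_vt) in_cons => /orP[/eqP->|/t_le].
apply: perm_trans (perm_remove_at_index v_s) _.
by rewrite perm_cons (perm_rem_cons v_s s_vt).
Qed.

Lemma perm_mb_step_little (s t : seq nat) v :
  perm_eq s (v :: t) -> {in t, forall x, v <= x} ->
  perm_eq (mb_step false s) (v.-1 :: t).
Proof.
rewrite /mb_step => s_vt t_ge; have v_s : v \in s by rewrite (perm_mem s_vt) mem_head.
have s_ne0 : s != [::] by case: (s) v_s.
have [min_in min_lb] := littlecount_spec (s := s) s_ne0.
have -> : littlecount s = v.
  apply/eqP; rewrite eqn_leq min_lb //=.
  by move: min_in; rewrite (perm_mem s_vt) in_cons => /orP[/eqP->|/t_ge].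
apply: perm_trans (perm_remove_at_index v_s) _.
by rewrite perm_cons (perm_rem_cons v_s s_vt).
Qed.

(* Up to order, every state of the process started from [nseq c.+1 n] is [balanced c m h a]:
   a smallest box with m matches and c boxes holding h or h+1; the walk only sees m and the
   excess D = c (h - m) + a of the other boxes. *)
Definition balanced (c m h a : nat) : seq nat := m :: nseq a h.+1 ++ nseq (c - a) h.

Definition reduces_to (c : nat) (s : seq nat) (m D : nat) : Prop :=
  exists h a, [/\ a < c, m <= h, D = c * (h - m) + a & perm_eq s (balanced c m h a)].

Lemma balanced_others_ge c h a x : x \in nseq a h.+1 ++ nseq (c - a) h -> h <= x.
Proof. by rewrite mem_cat !mem_nseq => /orP[|] /andP[_ /eqP->]. Qed.

Lemma reduces_to_sumn c s m D : reduces_to c s m D -> sumn s = c.+1 * m + D.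
Proof.
by case=> h [a [a_lt m_le -> /perm_sumn ->]]; rewrite /balanced /= sumn_cat !sumn_nseq; nia.
Qed.

Lemma reduces_to_has0 c s m D : reduces_to c s m D -> (0 \in s) = (m == 0).
Proof.
case=> h [a [a_lt m_le _ /perm_mem ->]]; rewrite /balanced in_cons eq_sym.
case: eqP => //= m_ne0; apply/negbTE/negP => /balanced_others_ge; lia.
Qed.

Lemma reduces_to_little c s m D :
  reduces_to c s m.+1 D -> reduces_to c (mb_step false s) m (D + c).
Proof.
case=> h [a [a_lt m_le D_eq s_perm]].
exists h, a; split; [lia | lia | rewrite D_eq; nia |].
by apply: perm_mb_step_little s_perm _ => x /balanced_others_ge; lia.
Qed.

Lemma reduces_to_big0 c s m :
  reduces_to c s m.+1 0 -> reduces_to c (mb_step true s) m c.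
Proof.
case=> h [a [a_lt m_le D_eq s_perm]].
have [a0 hm] : a = 0 /\ h = m.+1 by nia.
subst a h.
exists m.+1, 0; split; [lia | lia | nia |].
move: s_perm; rewrite /balanced /= subn0 => s_perm.
by apply: perm_mb_step_big s_perm _ => x; rewrite mem_nseq => /andP[_ /eqP->].
Qed.

Lemma reduces_to_big c s m D :
  reduces_to c s m.+1 D.+1 -> reduces_to c (mb_step true s) m.+1 D.
Proof.
case=> h [[|a] [a_lt m_le D_eq s_perm]].
- have h_gt : m.+1 < h by nia.
  have s_perm' : perm_eq s (h :: m.+1 :: nseq c.-1 h).
    apply: perm_trans s_perm _; rewrite /balanced /= subn0.
    by case: (c) a_lt => //= c' _; rewrite -(cat1s h) -(cat1s m.+1) perm_catCA.
  exists h.-1, c.-1; split; [lia | lia | nia |].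
  apply: perm_trans (perm_mb_step_big s_perm' _) _.
    by move=> x; rewrite in_cons mem_nseq => /orP[/eqP->|/andP[_ /eqP->]]; lia.
  apply/permP => P; rewrite /balanced /= count_cat !count_nseq /=.
  by rewrite (_ : c - c.-1 = 1); [rewrite (ltn_predK h_gt); lia | lia].
- have s_perm' : perm_eq s (h.+1 :: m.+1 :: nseq a h.+1 ++ nseq (c - a.+1) h).
    by apply: perm_trans s_perm _; rewrite /balanced /= -(cat1s h.+1) -(cat1s m.+1) perm_catCA.
  exists h, a; split; [lia | lia | lia |].
  apply: perm_trans (perm_mb_step_big s_perm' _) _.
    by move=> x; rewrite in_cons mem_cat !mem_nseq => /orP[/eqP->|/orP[|] /andP[_ /eqP->]]; lia.
  apply/permP => P; rewrite /balanced /= !count_cat !count_nseq /=.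
  by rewrite (_ : c - a = (c - a.+1).+1); [lia | lia].
Qed.

Local Open Scope ring_scope.

Lemma sum_tupleS (R : nmodType) (F : seq bool -> R) n :
  \sum_(t : n.+1.-tuple bool) F t = \sum_(b : bool) \sum_(t : n.-tuple bool) F (b :: t).
Proof.
rewrite pair_big /= (reindex (fun bt : bool * n.-tuple bool => cons_tuple bt.1 bt.2)) //=.
exists (fun t : n.+1.-tuple bool => (thead t, behead_tuple t)) => [[b t]|t] _ /=.
  by rewrite theadE; congr pair; apply: val_inj.
by apply: val_inj; rewrite /= (tuple_eta t).
Qed.

Section ExpectedResidue.
Variables (R : nzRingType) (p : R) (c : nat).

Lemma choice_weight_cons b (t : seq bool) :
  choice_weight p (b :: t) = (if b then p else 1 - p) * choice_weight p t.
Proof. by rewrite /choice_weight big_cons. Qed.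

Lemma sum_choice_weight n : \sum_(t : n.-tuple bool) choice_weight p t = 1.
Proof.
elim: n => [|n IHn].
  rewrite (eq_bigr (fun _ => 1)) => [|t _]; last by rewrite tuple0 /choice_weight big_nil.
  by rewrite sumr_const card_tuple.
rewrite sum_tupleS big_bool /=.
under eq_bigr do rewrite choice_weight_cons.
under [X in _ + X]eq_bigr do rewrite choice_weight_cons.
by rewrite -!mulr_sumr IHn !mulr1 addrC subrK.
Qed.

Definition run_mean n (s : seq nat) : R :=
  \sum_(t : n.-tuple bool) choice_weight p t * (mb_run s t)%:R.

Lemma run_mean0 s : run_mean 0 s = (sumn s)%:R.
Proof.
rewrite /run_mean (eq_bigr (fun _ => (sumn s)%:R)) => [|t _].
  by rewrite sumr_const card_tuple.
by rewrite tuple0 /choice_weight big_nil mul1r /=; case: ifP.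
Qed.

Lemma run_meanS n s : run_mean n.+1 s =
  if 0%N \in s then (sumn s)%:R
  else p * run_mean n (mb_step true s) + (1 - p) * run_mean n (mb_step false s).
Proof.
rewrite /run_mean (sum_tupleS (fun t => choice_weight p t * (mb_run s t)%:R)) big_bool /=.
under eq_bigr do rewrite choice_weight_cons.
under [X in _ + X]eq_bigr do rewrite choice_weight_cons.
case: ifP => _; last by rewrite !mulr_sumr; congr (_ + _); apply: eq_bigr => t _; rewrite mulrA.
by rewrite -!mulr_suml -!mulr_sumr sum_choice_weight !mulr1 -mulrDl addrC subrK mul1r.
Qed.

(* [f] is fuel: from (m, D) the walk stops after at most c.+1 * m + D moves. *)
Fixpoint walk_mean (f m D : nat) : R :=
  match f, m, D with
  | f.+1, m.+1, D.+1 => (1 - p) * walk_mean f m (D.+1 + c) + p * walk_mean f m.+1 D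
  | f.+1, m.+1, 0 => walk_mean f m c
  | _, _, _ => D%:R
  end.

Lemma run_mean_walk f s m D :
  reduces_to c s m D -> f = (c.+1 * m + D)%N -> run_mean f s = walk_mean f m D.
Proof.
elim: f s m D => [|f IHf] s m D s_mD f_eq.
  by rewrite run_mean0 (reduces_to_sumn s_mD) -f_eq /= (_ : D = 0%N) //; lia.
rewrite run_meanS (reduces_to_has0 s_mD).
case: m s_mD f_eq => [|m] s_mD f_eq /=; first by rewrite (reduces_to_sumn s_mD) muln0.
rewrite (IHf _ _ _ (reduces_to_little s_mD)); last by lia.
case: D s_mD f_eq => [|D] s_mD f_eq.
  by rewrite (IHf _ _ _ (reduces_to_big0 s_mD)); [rewrite -mulrDl addrC subrK mul1r | lia].
by rewrite (IHf _ _ _ (reduces_to_big s_mD)); [rewrite addrC | lia].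
Qed.

Definition residue m D := walk_mean (c.+1 * m + D) m D.

Lemma M_residue n : (0 < c)%N -> M c.+1 n p = residue n 0.
Proof.
move=> c_gt0; rewrite /M /residue addn0 -/(run_mean _ _) (@run_mean_walk _ _ n 0) ?addn0 //.
by exists n, 0%N; rewrite subnn muln0 /balanced subn0.
Qed.

Lemma residue0 D : residue 0 D = D%:R.
Proof. by rewrite /residue muln0; case: D. Qed.

Lemma residueS0 m : residue m.+1 0 = residue m c.
Proof. by rewrite /residue addn0 mulnS addSn addnC. Qed.

Lemma residueSS m D :
  residue m.+1 D.+1 = (1 - p) * residue m (D.+1 + c) + p * residue m.+1 D.
Proof.
rewrite /residue (_ : (c.+1 * m.+1 + D.+1 = (c.+1 * m + (D.+1 + c)).+1)%N); last by lia.
by rewrite /= (_ : (c.+1 * m + (D.+1 + c) = c.+1 * m.+1 + D)%N) //; lia.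
Qed.

End ExpectedResidue.

Section FirstPassage.
Variables (R : numFieldType) (p : R) (c : nat).
Local Notation q := (1 - p).
Local Notation residue := (residue p c).

(* By the cycle lemma, [ballot D u] counts the sequences of u little and D + c u big moves
   taking the excess from D to 0 without reaching 0 earlier. *)
Definition ballot (D u : nat) : R :=
  D%:R / (u + D + c * u)%:R * ('C(u + D + c * u, u))%:R.

Lemma ballot0 u : ballot 0 u = 0.
Proof. by rewrite /ballot !mul0r. Qed.

Lemma ballotS0 D : ballot D.+1 0 = 1.
Proof. by rewrite /ballot muln0 addn0 add0n bin0 mulr1 divff // pnatr_eq0. Qed.

Lemma ballotSS D u : ballot D.+1 u.+1 = ballot (D.+1 + c) u + ballot D u.+1.
Proof.
rewrite /ballot; set n := (u + D.+1 + c * u.+1)%N.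
rewrite (_ : (u.+1 + D.+1 + c * u.+1 = n.+1)%N); last by rewrite /n; lia.
rewrite (_ : (u + (D.+1 + c) + c * u = n)%N); last by rewrite /n; lia.
rewrite (_ : (u.+1 + D + c * u.+1 = n)%N); last by rewrite /n; lia.
have binS_n : 'C(n.+1, u.+1)%:R = n.+1%:R * 'C(n, u)%:R / u.+1%:R :> R.
  by rewrite -natrM (mul_bin_diag n.+1 u) natrM mulrAC divff ?mul1r // pnatr_eq0.
have binS_u : 'C(n, u.+1)%:R = (n - u)%:R * 'C(n, u)%:R / u.+1%:R :> R.
  by rewrite -natrM -(mul_bin_left n u) natrM mulrAC divff ?mul1r // pnatr_eq0.
have n_eq : n%:R = u%:R + D%:R + 1 + c%:R * u%:R + c%:R :> R.
  by rewrite /n !natrD !natrM -!natr1; ring.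
have n_neq0 : n%:R != 0 :> R by rewrite pnatr_eq0 /n; lia.
have n1_neq0 : n.+1%:R != 0 :> R by rewrite pnatr_eq0.
have u1_neq0 : u.+1%:R != 0 :> R by rewrite pnatr_eq0.
rewrite binS_n binS_u (_ : (n - u = D.+1 + c * u.+1)%N); last by rewrite /n; lia.
move: n_neq0 n1_neq0 u1_neq0; rewrite -(natr1 n) n_eq !natrD !natrM -!natr1 => *.
by field; apply/and3P.
Qed.

(* Weight of the paths from (m, D) whose excess first vanishes at level m'. *)
Definition hitting (m D m' : nat) : R :=
  if D is 0 then (m' == m)%:R
  else if (m' <= m)%N then ballot D (m - m') * q ^+ (m - m') * p ^+ (D + c * (m - m'))
  else 0.

Lemma hitting_pos m D m' : (0 < D)%N -> hitting m D m' =
  if (m' <= m)%N then ballot D (m - m') * q ^+ (m - m') * p ^+ (D + c * (m - m')) else 0.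
Proof. by case: D. Qed.

Lemma hittingSS m D m' : (m' <= m.+1)%N ->
  hitting m.+1 D.+1 m' = q * hitting m (D.+1 + c) m' + p * hitting m.+1 D m'.
Proof.
move=> le_m'm; rewrite /hitting le_m'm.
case: ltnP => [lt_mm'|le_m'm'].
  have -> : m' = m.+1 by apply/eqP; rewrite eqn_leq le_m'm.
  rewrite subnn muln0 !addn0 ballotS0 mulr0 add0r !mulr1 mul1r exprS.
  by case: D => [|D]; rewrite ?eqxx ?mulr1 // ballotS0 mul1r.
rewrite addSn /= subSn // ballotSS.
rewrite (_ : (D.+1 + c + c * (m - m') = (D + c * (m - m').+1).+1)%N); last by rewrite mulnS; lia.
case: D => [|D]; last by rewrite !exprS; ring.
by rewrite ballot0 ltn_eqF ?ltnS //= !exprS; ring.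
Qed.

(* The mean residue when the boundary D = 0 is ignored: the walk reaches level 0 by a little
   move from (1, b), and 'C(...) counts the unconstrained paths from (m, D) to (1, b). *)
Definition phi (m D : nat) : R :=
  if m is m1.+1 then
    \sum_(1 <= b < (D + c * m1).+1)
       (b + c)%:R * 'C(m1 + (D + c * m1 - b), m1)%:R * q ^+ m * p ^+ (D + c * m1 - b)
  else D%:R.

Lemma phiSS m D : phi m.+1 D.+1 = q * phi m (D.+1 + c) + p * phi m.+1 D.
Proof.
rewrite /phi; case: m => [|m].
  rewrite !muln0 !addn0 big_nat_recr //= subnn bin0 expr0 expr1 !mulr1 addrC mulr_sumr.
  congr (_ + _); first by rewrite mulrC.
  apply: eq_big_nat => b /andP[_ le_bD].
  by rewrite !add0n !bin0 subSn // exprS; ring.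
set top := (D.+1 + c * m.+1)%N.
rewrite (_ : (D.+1 + c + c * m = top)%N); last by rewrite /top mulnS; lia.
rewrite -[(D + c * m.+1).+1]/top.
transitivity (\sum_(1 <= b < top.+1)
   ((b + c)%:R * 'C(m + (top - b), m)%:R * q ^+ m.+2 * p ^+ (top - b)
  + (b + c)%:R * 'C(m + (top - b), m.+1)%:R * q ^+ m.+2 * p ^+ (top - b))).
  by apply: eq_big_nat => b _; rewrite addSn binS natrD; ring.
rewrite big_split /=; congr (_ + _).
  by rewrite mulr_sumr; apply: eq_big_nat => b _; rewrite exprS; ring.
rewrite big_nat_recr /=; last by rewrite /top; lia.
rewrite subnn addn0 bin_small // mulr0 !mul0r addr0 mulr_sumr.
apply: eq_big_nat => b /andP[_ lt_btop].
rewrite (_ : (top - b = (D + c * m.+1 - b).+1)%N); last by rewrite /top; lia.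
by rewrite addnS -addSn (exprS p); ring.
Qed.

Lemma residue_decomposition m D :
  residue m D = phi m D + \sum_(1 <= m' < m.+1) hitting m D m' * (residue m' 0 - phi m' 0).
Proof.
elim: m D => [|m IHm] D; first by rewrite residue0 big_geq ?addr0.
elim: D => [|D IHD].
  rewrite big_nat_recr // big_nat_cond big1 => [|m' /andP[/andP[_ lt_m'm] _]].
    by rewrite Monoid.mul1m /hitting eqxx mul1r addrC subrK.
  by rewrite /hitting ltn_eqF ?mul0r.
rewrite residueSS phiSS (IHm (D.+1 + c)) IHD.
under [in RHS]eq_big_nat => m' /andP[_ le_m'm] do rewrite hittingSS // mulrDl -!mulrA.
have hit_out : hitting m (D.+1 + c) m.+1 = 0 by rewrite /hitting addSn ltnn.
rewrite big_split -!mulr_sumr [X in _ = _ + (q * X + _)]big_nat_recr // hit_out.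
by rewrite mul0r Monoid.mulm1; ring.
Qed.
End FirstPassage.

Lemma leq_ceil_div j d n : (0 < d)%N -> (ceil_div j d <= n)%N = (j <= d * n)%N.
Proof. by move=> d_gt0; rewrite /ceil_div -ltnS ltn_divLR // mulSn; lia. Qed.

Lemma ballot_sk (R : numFieldType) c u : ballot R c c u = sk c.+1 u.+1.
Proof. by rewrite /ballot /sk (_ : (c.+1 * u.+1).-1 = u + c + c * u)%N //; lia. Qed.

Lemma dk_expand (R : fieldType) c m b : (0 < c)%N -> (1 <= b <= c + c * m)%N ->
  @dk R c.+1 m.+2 (b + c) = 'C(m + (c + c * m - b), m)%:R
    - \sum_(1 <= l < m.+2) (if (b <= c * (m.+1 - l))%N
        then sk c.+1 l * 'C(m.+1 - l + (c * (m.+1 - l) - b), m.+1 - l)%:R else 0).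
Proof.
move=> c_gt0 /andP[b_ge1 b_le]; rewrite /dk ifT /=; last by apply/andP; split; lia.
rewrite (_ : (c.+1 * m.+2 - 2 - (b + c) = m + (c + c * m - b))%N); last by lia.
have ceil_gt1 : (1 < ceil_div (b + c) c)%N by rewrite ltnNge leq_ceil_div //; lia.
rewrite subn2 [X in _ - X = _](big_nat_widen _ _ m.+2); last by lia.
rewrite big_mkcond; congr (_ - _); apply: eq_big_nat => l /andP[l_ge1 l_le] /=.
rewrite ltnS (_ : (l <= _ - _) = (ceil_div (b + c) c <= m.+2 - l))%N; last by lia.
rewrite leq_ceil_div // subSn // -/(m.+1 - l)%N; set s := (m.+1 - l)%N.
rewrite (_ : (b + c <= c * s.+1) = (b <= c * s))%N; last by rewrite mulnS addnC leq_add2l.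
case: ifP => // le_b_cs.
by rewrite (_ : (c.+1 * s.+1 - 1 - (b + c) = s + (c * s - b))%N) ?subn1 //; lia.
Qed.

Section Identification.
Variables (R : numFieldType) (p : R) (c : nat).
Hypotheses (c_gt0 : (0 < c)%N) (p_neq0 : p != 0) (q_neq0 : 1 - p != 0).
Local Notation q := (1 - p).
Local Notation phi := (phi p c).
Local Notation residue := (residue p c).
Local Notation hitting := (hitting p c).

Lemma hitting_sk m i : (1 <= i < m.+2)%N ->
  hitting m.+1 c (m.+2 - i) = q^-1 * sk c.+1 i * (p ^+ c * q) ^+ i.
Proof.
case: i => [|u] // /andP[_ le_um]; rewrite hitting_pos //.
rewrite ifT; last by lia.
rewrite (_ : (m.+1 - (m.+2 - u.+1) = u)%N); last by lia.
by rewrite ballot_sk exprMn -exprM mulnS exprS; field.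
Qed.

Lemma sum_hitting_residue m :
  \sum_(1 <= m' < m.+2) hitting m.+1 c m' * residue m' 0 =
  q^-1 * \sum_(1 <= i < m.+2) sk c.+1 i * (p ^+ c * q) ^+ i * residue (m.+2 - i) 0.
Proof.
rewrite big_nat_rev mulr_sumr; apply: eq_big_nat => i i_range.
rewrite (_ : (1 + m.+2 - i.+1 = m.+2 - i)%N); last by lia.
by rewrite (hitting_sk i_range) !mulrA.
Qed.

Lemma Lk_expand m : Lk c.+1 m.+2 p =
  \sum_(1 <= b < (c + c * m).+1)
     (b + c)%:R * q ^+ m.+1 * p ^+ (c + c * m - b) * dk c.+1 m.+2 (b + c).
Proof.
rewrite /Lk /= (@big_addn _ _ _ 1 _ c) (_ : ((c * m.+2).+1 - c = (c + c * m).+1)%N); last by lia.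
rewrite mulr_sumr; apply: eq_big_nat => b /andP[_ le_b].
rewrite exprMn -exprM (_ : (c * m.+2 = (c + c * m - b) + (b + c))%N); last by lia.
rewrite exprD exprVn (exprS q m.+1).
have : p ^+ (b + c) != 0 by rewrite expf_neq0.
move: (p ^+ (b + c)) => pbc pbc_neq0.
by field; apply/andP.
Qed.

Lemma hitting_phi0 m l : (1 <= l < m.+2)%N ->
  hitting m.+1 c (m.+2 - l) * phi (m.+2 - l) 0 =
  \sum_(1 <= b < (c + c * m).+1) (if (b <= c * (m.+1 - l))%N
     then sk c.+1 l * 'C(m.+1 - l + (c * (m.+1 - l) - b), m.+1 - l)%:R *
          ((b + c)%:R * q ^+ m.+1 * p ^+ (c + c * m - b))
     else 0).
Proof.
move=> l_range; rewrite (hitting_sk l_range); case: l l_range => [|u] // /andP[_ le_um].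
have [s ->] : exists s, m = (u + s)%N by exists (m - u)%N; lia.
rewrite (_ : ((u + s).+2 - u.+1 = s.+1)%N); last by lia.
rewrite (_ : ((u + s).+1 - u.+1 = s)%N); last by lia.
rewrite /phi mulr_sumr (big_nat_widen _ _ (c + c * (u + s)).+1); last by lia.
rewrite big_mkcond; apply: eq_big_nat => b _ /=; rewrite !add0n ltnS; case: ifP => // le_b.
rewrite (_ : (c + c * (u + s) - b = c * u.+1 + (c * s - b))%N); last by lia.
rewrite -addnS !exprD exprMn -exprM exprS.
by field.
Qed.

Lemma Lk_phi m :
  Lk c.+1 m.+2 p = phi m.+1 c - \sum_(1 <= m' < m.+2) hitting m.+1 c m' * phi m' 0.
Proof.
rewrite big_nat_rev (eq_big_nat _ _ (F2 := fun l => hitting m.+1 c (m.+2 - l) * phi (m.+2 - l) 0));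
  last by move=> l _; rewrite (_ : (1 + m.+2 - l.+1 = m.+2 - l)%N) //; lia.
rewrite (eq_big_nat _ _ (fun l l_range => hitting_phi0 l_range)) exchange_big_nat.
rewrite Lk_expand /phi -sumrB; apply: eq_big_nat => b b_range.
rewrite dk_expand // mulrBr mulr_sumr; congr (_ - _); first by ring.
by apply: eq_bigr => l _; case: ifP => _; [rewrite mulrC | rewrite mulr0].
Qed.
End Identification.

Theorem lemma3p1 (R : realFieldType) (k : nat) (p : R) :
  (2 <= k)%N -> 0 < p -> p < 1 ->
  M k 1 p = (k - 1)%:R /\
  (forall n : nat, (2 <= n)%N ->
     M k n p =
       (1 - p)^-1 * \sum_(1 <= i < n)
          sk k i * (p ^+ (k - 1) * (1 - p)) ^+ i * M k (n - i) p
       + Lk k n p).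
Proof.
move=> k_ge2 p_gt0 p_lt1; have [c k_eq] : exists c, k = c.+1 by exists k.-1; lia.
have c_gt0 : (0 < c)%N by lia.
have p_neq0 : p != 0 by rewrite gt_eqF.
have q_neq0 : 1 - p != 0 by rewrite gt_eqF // subr_gt0.
have M_eq n : M k n p = residue p c n 0 by rewrite k_eq M_residue.
rewrite k_eq subn1 /= -k_eq M_eq residueS0 residue0; split=> // n n_ge2.
have [m ->] : exists m, n = m.+2 by exists (n - 2)%N; lia.
rewrite M_eq residueS0 residue_decomposition.
under [in RHS]eq_bigr do rewrite M_eq.
under [X in _ + X = _]eq_bigr do rewrite mulrBr.
by rewrite sumrB k_eq sum_hitting_residue // Lk_phi //; ring.
Qed.
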